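(* Let $\mathcal H$ be a complex Hilbert space and $k\ge 3$. If a nonzero continuous symmetric $k$-linear form $T$ on $\mathcal H$ attains its norm at $(\mathbf{x}_1,\ldots,\mathbf{x}_k)$, where $\mathbf{x}_1,\ldots,\mathbf{x}_k$ are norm one vectors, then $\dim(\operatorname{span}\{\mathbf{x}_1,\ldots,\mathbf{x}_k\})=1$.
   Context: $k$-linear means $\mathbb C$-multilinear. $\|T\|=\sup\{|T(\mathbf{w}_1,\ldots,\mathbf{w}_k)|:\|\mathbf{w}_i\|\le1\}$, and $T$ attains its norm at $(\mathbf{x}_1,\ldots,\mathbf{x}_k)$ if $|T(\mathbf{x}_1,\ldots,\mathbf{x}_k)|=\|T\|$. *)

From HB Require Import structures.
From mathcomp Require Import all_boot all_order all_algebra all_fingroup.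
From mathcomp Require Import complex.
From mathcomp Require Import boolp classical_sets reals.

Set Implicit Arguments.
Unset Strict Implicit.
Unset Printing Implicit Defensive.

Import Order.TTheory GRing.Theory Num.Theory.
Local Open Scope ring_scope.
Local Open Scope classical_set_scope.

Definition cmod (R : realType) (z : R[i]) : R := Normc.normc z.

Definition ipnorm (R : realType) (V : lmodType R[i]) (ip : V -> V -> R[i])
  (x : V) : R := Num.sqrt (complex.Re (ip x x)).

Record is_hilbert (R : realType) (V : lmodType R[i]) (ip : V -> V -> R[i]) :
  Prop := IsHilbert {
  ip_linear : forall (a : R[i]) (x y z : V), ip (a *: x + y) z = a * ip x z + ip y z;
  ip_conj : forall x y : V, ip y x = conjc (ip x y);
  ip_pos : forall x : V, 0 <= complex.Re (ip x x);
  ip_definite : forall x : V, ip x x = 0 -> x = 0;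
  ip_complete : forall u : nat -> V,
    (forall e : R, 0 < e -> exists N : nat, forall m n : nat,
        (N <= m)%N -> (N <= n)%N -> ipnorm ip (u m - u n) < e) ->
    exists l : V, forall e : R, 0 < e -> exists N : nat, forall n : nat,
        (N <= n)%N -> ipnorm ip (u n - l) < e
}.

Definition upd (V : Type) (k : nat) (w : 'I_k -> V) (i : 'I_k) (v : V) :
  'I_k -> V := fun j => if j == i then v else w j.

Definition multilinear (R : realType) (V : lmodType R[i]) (k : nat)
  (T : ('I_k -> V) -> R[i]) : Prop :=
  forall (w : 'I_k -> V) (i : 'I_k) (a : R[i]) (x y : V),
    T (upd w i (a *: x + y)) = a * T (upd w i x) + T (upd w i y).

Definition sym_kform (V : Type) (C : Type) (k : nat)
  (T : ('I_k -> V) -> C) : Prop :=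
  forall (s : 'S_k) (w : 'I_k -> V), T (fun j => w (s j)) = T w.

Definition continuous_form (R : realType) (V : lmodType R[i])
  (ip : V -> V -> R[i]) (k : nat) (T : ('I_k -> V) -> R[i]) : Prop :=
  forall (x : 'I_k -> V) (e : R), 0 < e -> exists d : R, 0 < d /\
    forall y : 'I_k -> V, (forall i, ipnorm ip (y i - x i) < d) ->
      cmod (T y - T x) < e.

Definition form_norm (R : realType) (V : lmodType R[i])
  (ip : V -> V -> R[i]) (k : nat) (T : ('I_k -> V) -> R[i]) : R :=
  sup [set r : R | exists w : 'I_k -> V,
         (forall i, ipnorm ip (w i) <= 1) /\ r = cmod (T w)].

Definition attains_norm_at (R : realType) (V : lmodType R[i])
  (ip : V -> V -> R[i]) (k : nat) (T : ('I_k -> V) -> R[i])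
  (x : 'I_k -> V) : Prop :=
  cmod (T x) = form_norm ip T.

Definition span_of (R : realType) (V : lmodType R[i]) (k : nat)
  (x : 'I_k -> V) : set V :=
  [set v | exists c : 'I_k -> R[i], v = \sum_(i < k) c i *: x i].

Definition dim_one (R : realType) (V : lmodType R[i]) (S : set V) : Prop :=
  exists v : V, v != 0 /\ S = [set a *: v | a in [set: R[i]]].

From HB Require Import structures.
From mathcomp Require Import all_boot all_order all_algebra all_fingroup.
From mathcomp Require Import complex.
From mathcomp Require Import boolp classical_sets reals.
From mathcomp Require Import ring lra.
Import Order.TTheory GRing.Theory Num.Theory.
(* ring_scope is opened last so that x^* always denotes Num.conj, which on R[i]
   is conjc; mixing the two notations would defeat rewriting. *)
Local Open Scope complex_scope.
Local Open Scope ring_scope.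
Set Implicit Arguments.
Unset Strict Implicit.
Unset Printing Implicit Defensive.

(* Freezing all but three slots of T at the x_m gives a bounded symmetric
   trilinear form F with a maximizer (x_i, x_j, x_l): unit vectors at which
   |F| equals ||T||.  At a maximizer (a, b, c) every slot is represented by the
   inner product, e.g. F(u, b, c) = F(a, b, c) <u, a>, because a functional on
   an inner product space that attains its norm at a unit vector a is a
   multiple of <., a>.  Normalising lambda a + b with |lambda| = 1 gives new
   maximizers (y, y, c); comparing their representations for lambda = 1 and
   lambda = i yields F(a, a, u) = F(a, b, c) <a, b> <u, c>, from which
   |<a, b>| = 1, i.e. a = <a, b> b. *)

Section ComplexModulus.
Variable R : realType.
Implicit Types (z w : R[i]) (r : R).

Lemma normc_cmod z : `|z| = (cmod z)%:C.
Proof. by case: z. Qed.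

Lemma cmod_ge0 z : 0 <= cmod z.
Proof. by rewrite -ler0c -normc_cmod normr_ge0. Qed.

Lemma cmodM z w : cmod (z * w) = cmod z * cmod w.
Proof. exact: Normc.normcM. Qed.

Lemma cmodJ z : cmod z^* = cmod z.
Proof. by apply: complexI; rewrite -!normc_cmod norm_conjC. Qed.

Lemma cmodR r : 0 <= r -> cmod r%:C = r.
Proof. by move=> r_ge0; apply: complexI; rewrite -normc_cmod ger0_norm ?ler0c. Qed.

Lemma cmod0 : cmod (0 : R[i]) = 0.
Proof. exact: Normc.normc0. Qed.

Lemma cmodD z w : cmod (z + w) <= cmod z + cmod w.
Proof. exact: le_normcD. Qed.

Lemma cmod_eq0 z : (cmod z == 0) = (z == 0).
Proof.
by apply/eqP/eqP => [/Normc.eq0_normc|->]; last exact: cmod0.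
Qed.

Lemma mulcJ_cmod z : z * z^* = (cmod z ^+ 2)%:C.
Proof. by rewrite -normCK normc_cmod rmorphXn. Qed.

Lemma cmod_unimodular z : z * z^* = 1 -> cmod z = 1.
Proof.
rewrite mulcJ_cmod -[1](rmorph1 (real_complex R)) => /complexI/eqP.
by rewrite sqrp_eq1 ?cmod_ge0 // => /eqP.
Qed.

End ComplexModulus.

Lemma exists_third_index k (i j : 'I_k) :
  (3 <= k)%N -> exists l, (l != i) && (l != j).
Proof.
move=> k3; apply/existsP; apply: contraTT k3 => /existsPn lij.
have : [set: 'I_k] \subset [set i; j].
  by apply/fintype.subsetP => l _; have := lij l; rewrite !inE negb_and !negbK.
move/subset_leq_card; rewrite cardsT card_ord cards2 -ltnNge => /leq_ltn_trans.
by apply; rewrite !ltnS leq_b1.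
Qed.

Lemma dim_one_span_collinear (R : realType) (V : lmodType R[i]) k
    (x : 'I_k -> V) (c : 'I_k -> R[i]) i0 :
  x i0 != 0 -> (forall i, x i = c i *: x i0) -> dim_one (span_of x).
Proof.
move=> x0_neq0 xE; exists (x i0); split => //; apply/seteqP; split => z.
  move=> [a ->]; exists (\sum_i a i * c i) => //.
  by rewrite scaler_suml; apply: eq_bigr => i _; rewrite -scalerA -xE.
move=> [a _ <-]; exists (fun i => if i == i0 then a else 0).
rewrite (bigD1 i0) //= eqxx big1 ?addr0 // => i /negbTE ->.
exact: scale0r.
Qed.

Section InnerProduct.
Variables (R : realType) (V : lmodType R[i]) (ip : V -> V -> R[i]).
Hypothesis ipH : is_hilbert ip.

Lemma ipC x y : ip x y = (ip y x)^*.
Proof. exact: ip_conj. Qed.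

Lemma ipDl x y z : ip (x + y) z = ip x z + ip y z.
Proof. by have := ip_linear ipH 1 x y z; rewrite scale1r mul1r. Qed.

Lemma ip0l z : ip 0 z = 0.
Proof. by apply: (addrI (ip 0 z)); rewrite -ipDl !addr0. Qed.

Lemma ipZl a x z : ip (a *: x) z = a * ip x z.
Proof. by have := ip_linear ipH a x 0 z; rewrite addr0 ip0l addr0. Qed.

Lemma ipNl x z : ip (- x) z = - ip x z.
Proof. by rewrite -scaleN1r ipZl mulN1r. Qed.

Lemma ipDr x y z : ip x (y + z) = ip x y + ip x z.
Proof. by rewrite ipC ipDl rmorphD /= -!ipC. Qed.

Lemma ipZr a x y : ip x (a *: y) = a^* * ip x y.
Proof. by rewrite ipC ipZl rmorphM /= -ipC. Qed.

Lemma ipNr x y : ip x (- y) = - ip x y.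
Proof. by rewrite -scaleN1r ipZr rmorphN rmorph1 mulN1r. Qed.

Lemma ip_self v : ip v v = (ipnorm ip v ^+ 2)%:C.
Proof.
rewrite sqr_sqrtr ?ip_pos //; have := ip_conj ipH v v.
by case: (ip v v) => a b /= [b0]; congr Complex; lra.
Qed.

Lemma ipnorm_ge0 v : 0 <= ipnorm ip v.
Proof. exact: sqrtr_ge0. Qed.

Lemma ipnorm0 : ipnorm ip 0 = 0.
Proof. by rewrite /ipnorm ip0l sqrtr0. Qed.

Lemma ipnorm_eq0 v : (ipnorm ip v == 0) = (v == 0).
Proof.
apply/eqP/eqP => [v0|->]; last exact: ipnorm0.
by apply: (ip_definite ipH); rewrite ip_self v0 expr0n.
Qed.

Lemma ipnorm_unit v : ipnorm ip v = 1 -> ip v v = 1.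
Proof. by rewrite ip_self => ->; rewrite expr1n. Qed.

Lemma ip_unit_norm v : ip v v = 1 -> ipnorm ip v = 1.
Proof. by rewrite /ipnorm => ->; rewrite sqrtr1. Qed.

Lemma ipnormZ a v : ipnorm ip (a *: v) = cmod a * ipnorm ip v.
Proof.
rewrite [LHS]/ipnorm ipZl ipZr mulrA mulcJ_cmod ip_self -rmorphM /=.
by rewrite -exprMn sqrtr_sqr ger0_norm // mulr_ge0 // ?cmod_ge0 ?ipnorm_ge0.
Qed.

Definition normalize v := (ipnorm ip v)^-1%:C *: v.

Lemma normalize_scale v : v != 0 -> ((ipnorm ip v)^-1%:C) ^+ 2 * ip v v = 1.
Proof.
rewrite -ipnorm_eq0 => nv0.
by rewrite ip_self -rmorphXn -rmorphM /= -exprMn mulVf // expr1n.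
Qed.

Lemma ip_normalize v : v != 0 -> ip (normalize v) (normalize v) = 1.
Proof.
rewrite -ipnorm_eq0 => nv0.
rewrite ip_self ipnormZ cmodR ?invr_ge0 ?ipnorm_ge0 //.
by rewrite mulVf // expr1n.
Qed.

Lemma unimodular_ip_parallel a b : ip a a = 1 -> ip b b = 1 ->
  ip a b * (ip a b)^* = 1 -> a = ip a b *: b.
Proof.
move=> a1 b1 r1; apply/eqP; rewrite -subr_eq0; apply/eqP/(ip_definite ipH).
rewrite ipDl ipNl !(ipDr, ipNr, ipZl, ipZr) a1 b1 (ipC b a).
by rewrite mulr1 subrr subr0 mulrC r1 subrr.
Qed.

Lemma norming_functionalE (phi : V -> R[i]) (M : R) (a : V) :
  (forall al u v, phi (al *: u + v) = al * phi u + phi v) ->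
  (forall u, cmod (phi u) <= M * ipnorm ip u) ->
  ip a a = 1 -> cmod (phi a) = M ->
  forall u, phi u = phi a * ip u a.
Proof.
move=> phi_lin phi_bd a1 phiaM u.
set z := u - ip u a *: a.
have za : ip z a = 0 by rewrite /z ipDl ipNl ipZl a1 mulr1 subrr.
suff phiz0 : phi z = 0.
  by rewrite -[u in phi u](subrK (ip u a *: a)) -/z addrC phi_lin phiz0 addr0 mulrC.
clearbody z; apply/eqP; apply: contraT => phiz_neq0.
have phiz_gt0 : 0 < cmod (phi z) by rewrite lt_def cmod_eq0 phiz_neq0 cmod_ge0.
set q := cmod (phi z) ^+ 2.
have q_gt0 : 0 < q by rewrite exprn_gt0.
set N := ipnorm ip z.
have MN_gt0 : 0 < M * N := lt_le_trans phiz_gt0 (phi_bd z).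
set P := (M * N) ^+ 2.
have P_gt0 : 0 < P by rewrite exprn_gt0.
set g := 1 + P^-1 * q.
have g_gt1 : 1 < g by rewrite ltrDl mulr_gt0 // invr_gt0.
have g_ge0 : 0 <= g := ltW (lt_trans ltr01 g_gt1).
(* Moving from a along z, which is orthogonal to a, raises |phi| at first
   order but the norm only at second order; t is scaled so that both
   phi (t z + a) / phi a and ||t z + a||^2 equal g > 1. *)
set t := P^-1%:C * phi a * (phi z)^*.
have phi_t : phi (t *: z + a) = phi a * g%:C.
  have gE : g%:C = 1 + P^-1%:C * q%:C by rewrite rmorphD rmorphM rmorph1.
  by rewrite phi_lin /t gE /q -mulcJ_cmod; ring.
have ip_t : ip (t *: z + a) (t *: z + a) = g%:C.
  rewrite !(ipDl, ipDr, ipZl, ipZr) (ipC a z) za a1 rmorph0 !mulr0 !addr0 add0r.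
  rewrite mulrA mulcJ_cmod ip_self -rmorphM /g rmorphD rmorph1 addrC /=.
  congr (_ + _%:C).
  rewrite /t !cmodM cmodJ phiaM cmodR ?invr_ge0 ?(ltW P_gt0) // -/N /q /P.
  by field; move: (gt_eqF MN_gt0); rewrite mulf_eq0 => /norP[-> ->].
have M_gt0 : 0 < M by have := ipnorm_ge0 z; rewrite -/N; nra.
have := phi_bd (t *: z + a).
rewrite phi_t cmodM phiaM cmodR // /ipnorm ip_t /=.
rewrite ler_pM2l // => g_le_sqrt.
have := sqr_sqrtr g_ge0; have := sqrtr_ge0 g; nra.
Qed.

Section SymmetricTrilinearForm.
Variables (F : V -> V -> V -> R[i]) (M : R).
Hypothesis M_gt0 : 0 < M.
Hypothesis F_linear :
  forall al a a' b c, F (al *: a + a') b c = al * F a b c + F a' b c.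
Hypothesis F_sym12 : forall a b c, F a b c = F b a c.
Hypothesis F_sym23 : forall a b c, F a b c = F a c b.
Hypothesis F_bounded : forall u b c,
  ip b b = 1 -> ip c c = 1 -> cmod (F u b c) <= M * ipnorm ip u.

Lemma FD1 a a' b c : F (a + a') b c = F a b c + F a' b c.
Proof. by have := F_linear 1 a a' b c; rewrite scale1r mul1r. Qed.

Lemma FZ1 al a b c : F (al *: a) b c = al * F a b c.
Proof.
have F0 : F 0 b c = 0.
  by apply: (addrI (F 0 b c)); rewrite -FD1 !addr0.
by have := F_linear al a 0 b c; rewrite !addr0 F0 addr0.
Qed.

Lemma FD2 a b b' c : F a (b + b') c = F a b c + F a b' c.
Proof. by rewrite F_sym12 FD1 -!(F_sym12 a). Qed.

Lemma FZ2 al a b c : F a (al *: b) c = al * F a b c.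
Proof. by rewrite F_sym12 FZ1 -(F_sym12 a). Qed.

Definition maximizer a b c :=
  [/\ ip a a = 1, ip b b = 1, ip c c = 1 & cmod (F a b c) = M].

Lemma maximizerC12 a b c : maximizer a b c -> maximizer b a c.
Proof. by case=> *; split => //; rewrite F_sym12. Qed.

Lemma maximizerC23 a b c : maximizer a b c -> maximizer a c b.
Proof. by case=> *; split => //; rewrite F_sym23. Qed.

Lemma maximizer_neq0 a b c : maximizer a b c -> F a b c != 0.
Proof. by case=> _ _ _ FM; rewrite -cmod_eq0 FM gt_eqF. Qed.

Lemma maximizer_riesz1 a b c u : maximizer a b c -> F u b c = F a b c * ip u a.
Proof.
case=> a1 b1 c1 FM.
exact: (norming_functionalE (fun al v w => F_linear al v w b c)
  (fun v => F_bounded v b1 c1) a1 FM).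
Qed.

Lemma maximizer_riesz2 a b c u : maximizer a b c -> F a u c = F a b c * ip u b.
Proof. by move/maximizerC12/(maximizer_riesz1 u) => h; rewrite F_sym12 h F_sym12. Qed.

Lemma maximizer_riesz3 a b c u : maximizer a b c -> F a b u = F a b c * ip u c.
Proof.
move/maximizerC23/maximizerC12/(maximizer_riesz1 u) => h.
by rewrite F_sym23 F_sym12 h F_sym12 F_sym23.
Qed.

Lemma maximizer_scale la a b c :
  la * la^* = 1 -> maximizer a b c -> maximizer (la *: a) b c.
Proof.
move=> la1 [a1 b1 c1 FM]; split => //.
  by rewrite ipZl ipZr a1 mulr1.
by rewrite FZ1 cmodM cmod_unimodular // mul1r.
Qed.

Lemma maximizer_sum a b c : maximizer a b c -> a + b != 0 ->
  let y := normalize (a + b) in maximizer y y c /\ F y y c = F a b c.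
Proof.
move=> abc s_neq0 y; have [a1 b1 c1 FM] := abc.
have Fss : F (a + b) (a + b) c = F a b c * ip (a + b) (a + b).
  rewrite FD1 !FD2 (maximizer_riesz2 a abc) (maximizer_riesz1 b abc) -(F_sym12 a b c).
  by rewrite !(ipDl, ipDr) a1 b1; ring.
have Fyy : F y y c = F a b c.
  rewrite /y /normalize FZ1 FZ2 Fss -[RHS]mulr1 -(normalize_scale s_neq0).
  ring.
have y1 : ip y y = 1 by exact: ip_normalize.
by split => //; split => //; rewrite Fyy.
Qed.

Lemma maximizer_diag_identity la a b c u : la * la^* = 1 -> maximizer a b c ->
  la ^+ 2 * F a a u + F b b u = (la ^+ 2 * ip a b + ip b a) * (F a b c * ip u c).
Proof.
move=> la1 abc; have [a1 b1 c1 FM] := abc.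
have la_neq0 : la != 0 by apply: contra_eq_neq la1 => ->; rewrite mul0r eq_sym oner_neq0.
have laJ : la^* = la^-1 by apply: (mulfI la_neq0); rewrite la1 mulfV.
have Fabu := maximizer_riesz3 u abc.
have [s0|s_neq0] := eqVneq (la *: a + b) 0.
  have b_def : b = - (la *: a) by apply/eqP; rewrite -addr_eq0 addrC s0.
  move: Fabu; rewrite b_def -scaleNr FZ2 => <-.
  by rewrite FZ1 FZ2 ipZl ipZr a1 rmorphN /= laJ; field.
have [y_max Fy] := maximizer_sum (maximizer_scale la1 abc) s_neq0.
have := maximizer_riesz3 u y_max; rewrite Fy FZ1 /normalize FZ1 FZ2 => Fyyu.
set s := la *: a + b in s_neq0 Fyyu *.
have Fss : F s s u = la * (F a b c * ip u c) * ip s s.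
  rewrite -[LHS]mul1r -(normalize_scale s_neq0).
  transitivity (ip s s * ((ipnorm ip s)^-1%:C * ((ipnorm ip s)^-1%:C * F s s u))).
    by ring.
  by rewrite Fyyu; ring.
have -> : la ^+ 2 * F a a u + F b b u = F s s u - 2%:R * la * (F a b c * ip u c).
  by rewrite /s FD1 !FD2 !FZ1 !FZ2 (F_sym12 b a u) Fabu; ring.
by rewrite Fss /s !(ipDl, ipDr, ipZl, ipZr) a1 b1 laJ; field.
Qed.

Lemma maximizer_diag a b c u : maximizer a b c ->
  F a a u = F a b c * ip a b * ip u c.
Proof.
move=> abc.
have i_unit : 'i * 'i^* = 1 :> R[i] by rewrite conjCi mulrN -expr2 sqrCi opprK.
have one_unit : 1 * 1^* = 1 :> R[i] by rewrite rmorph1 mulr1.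
have := maximizer_diag_identity u one_unit abc.
have := maximizer_diag_identity u i_unit abc.
rewrite sqrCi expr1n !mulN1r !mul1r => Ei E1.
have two_neq0 : 2%:R != 0 :> R[i] by rewrite pnatr_eq0.
apply: (mulfI two_neq0).
transitivity ((F a a u + F b b u) - (- F a a u + F b b u)); first by ring.
by rewrite E1 Ei; ring.
Qed.

Lemma maximizer_parallel a b c : maximizer a b c -> a = ip a b *: b.
Proof.
move=> abc; have [a1 b1 c1 FM] := abc.
have [ab0|ab_neq0] := eqVneq (a + b) 0.
  have -> : a = - b by apply/eqP; rewrite -addr_eq0 ab0.
  by rewrite ipNl b1 scaleN1r.
have p_rq : ip a c = ip a b * ip b c.
  apply: (mulfI (maximizer_neq0 abc)).
  by rewrite -(maximizer_riesz3 a abc) F_sym23 (maximizer_diag b abc) mulrA.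
have q_rp : ip b c = (ip a b)^* * ip a c.
  have bac := maximizerC12 abc.
  apply: (mulfI (maximizer_neq0 bac)).
  by rewrite -(maximizer_riesz3 b bac) F_sym23 (maximizer_diag a bac) -ipC mulrA.
(* Otherwise also <b, c> = 0, so c is orthogonal to y = (a + b)/||a + b||,
   and maximizer_diag applied to the maximizer (y, c, y) kills F y y c. *)
have p_neq0 : ip a c != 0.
  have [y_max _] := maximizer_sum abc ab_neq0.
  apply/eqP => p0; move: (maximizer_neq0 y_max).
  rewrite (maximizer_diag c (maximizerC23 y_max)) /normalize ipZl ipDl q_rp p0.
  by rewrite !(mulr0, addr0) mul0r eqxx.
apply: unimodular_ip_parallel => //; apply: (mulIf p_neq0).
by rewrite mul1r -mulrA -q_rp -p_rq.
Qed.

End SymmetricTrilinearForm.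

Section MultilinearForm.
Variables (k : nat) (T : ('I_k -> V) -> R[i]).
Hypothesis T_multi : multilinear T.

Lemma upd_id (w : 'I_k -> V) i : upd w i (w i) = w.
Proof. by apply: funext => m; rewrite /upd; case: eqP => // ->. Qed.

Lemma upd_updC (w : 'I_k -> V) i j a b :
  i != j -> upd (upd w i a) j b = upd (upd w j b) i a.
Proof.
move=> ij; apply: funext => m; rewrite /upd.
by case: eqP => // ->; rewrite eq_sym (negbTE ij).
Qed.

Lemma T_upd0 w i : T (upd w i 0) = 0.
Proof.
apply: (addrI (T (upd w i 0))); rewrite addr0.
by have := T_multi w i 1 0 0; rewrite scale1r addr0 mul1r.
Qed.

Lemma T_updZ w i a u : T (upd w i (a *: u)) = a * T (upd w i u).
Proof. by have := T_multi w i a u 0; rewrite !addr0 T_upd0 addr0. Qed.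

Lemma T_scale c w : T (fun m => c *: w m) = c ^+ k * T w.
Proof.
pose scaled n (m : 'I_k) := if (m < n)%N then c *: w m else w m.
suff scaledE n : (n <= k)%N -> T (scaled n) = c ^+ n * T w.
  by rewrite -scaledE //; congr T; apply: funext => m; rewrite /scaled ltn_ord.
elim: n => [_|n IHn lt_nk]; first by rewrite expr0 mul1r.
pose n' : 'I_k := Ordinal lt_nk.
have -> : scaled n.+1 = upd (scaled n) n' (c *: w n').
  apply: funext => m; rewrite /upd /scaled ltnS leq_eqVlt.
  have [->|mn] := eqVneq m n'; first by rewrite eqxx.
  have mn' : (val m == n) = false by apply/negbTE; exact: mn.
  by rewrite mn'.
have := upd_id (scaled n) n'; rewrite {2}/scaled ltnn => scaledK.
by rewrite T_updZ scaledK (IHn (ltnW lt_nk)) exprS mulrA.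
Qed.

Hypothesis T_cont : continuous_form ip T.

Lemma form_norm_has_sup : has_sup [set r : R | exists w : 'I_k -> V,
  (forall i, ipnorm ip (w i) <= 1) /\ r = cmod (T w)].
Proof.
split; first by exists (cmod (T (fun=> 0))), (fun=> 0); split=> // i; rewrite ipnorm0.
have [d [d_gt0 Td]] := T_cont (fun=> 0) ltr01.
pose h := d / 2.
have h_gt0 : 0 < h by rewrite divr_gt0.
have h_ge0 := ltW h_gt0.
exists ((1 + cmod (T (fun=> 0))) / h ^+ k) => _ [w [w1 ->]].
have small i : ipnorm ip (h%:C *: w i - 0) < d.
  rewrite subr0 ipnormZ cmodR //.
  apply: le_lt_trans (_ : h < d); last by rewrite /h ltr_pdivrMr // ltr_pMr // ltr1n.
  exact: ler_piMr h_ge0 (w1 i).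
have := le_trans (cmodD _ _) (lerD (ltW (Td _ small)) (lexx (cmod (T (fun=> 0))))).
rewrite subrK T_scale -rmorphXn cmodM cmodR ?exprn_ge0 // => le_hT.
by rewrite ler_pdivlMr ?exprn_gt0 // mulrC; lra.
Qed.

Lemma form_norm_ub w :
  (forall i, ipnorm ip (w i) <= 1) -> cmod (T w) <= form_norm ip T.
Proof. by move=> w1; apply: (sup_upper_bound form_norm_has_sup); exists w. Qed.

Lemma form_norm_upd w i u : (forall m, m != i -> ipnorm ip (w m) <= 1) ->
  cmod (T (upd w i u)) <= form_norm ip T * ipnorm ip u.
Proof.
move=> w1; have [->|u_neq0] := eqVneq u 0.
  by rewrite T_upd0 cmod0 ipnorm0 mulr0.
have n_gt0 : 0 < ipnorm ip u by rewrite lt_def ipnorm_eq0 u_neq0 ipnorm_ge0.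
have -> : T (upd w i u) = (ipnorm ip u)%:C * T (upd w i (normalize u)).
  by rewrite T_updZ mulrA -rmorphM mulfV ?gt_eqF // mul1r.
rewrite cmodM cmodR ?ipnorm_ge0 // mulrC ler_pM2r //.
apply: form_norm_ub => m; rewrite /upd; case: eqP => [_|/eqP mi]; last exact: w1.
by rewrite ip_unit_norm // ip_normalize.
Qed.

Lemma form_norm_gt0 : (exists w, T w != 0) -> 0 < form_norm ip T.
Proof.
move=> [w Tw_neq0].
pose s := 1 + \sum_i ipnorm ip (w i).
have sum_ge0 : 0 <= \sum_i ipnorm ip (w i) by apply: sumr_ge0 => i _; exact: ipnorm_ge0.
have s_gt0 : 0 < s by rewrite /s; lra.
have := @form_norm_ub (fun m => s^-1%:C *: w m).
rewrite T_scale cmodM => le_norm; apply: lt_le_trans (le_norm _).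
  have sC_neq0 : s^-1%:C != 0 :> R[i].
    by apply/eqP => /complexI/eqP; rewrite invr_eq0 gt_eqF.
  by rewrite mulr_gt0 // lt_def cmod_eq0 cmod_ge0 ?expf_neq0 ?Tw_neq0.
move=> i; rewrite ipnormZ cmodR ?invr_ge0 ?(ltW s_gt0) // ler_pdivrMl // mulr1.
rewrite /s (bigD1 i) //=; have := ipnorm_ge0 (w i).
have : 0 <= \sum_(j | j != i) ipnorm ip (w j) by apply: sumr_ge0 => j _; exact: ipnorm_ge0.
lra.
Qed.

Lemma T_swap (T_sym : sym_kform T) w i j a b :
  i != j -> T (upd (upd w i a) j b) = T (upd (upd w i b) j a).
Proof.
move=> ij; rewrite -(T_sym (tperm i j)); congr T; apply: funext => m; rewrite /upd.
case: tpermP => [->|->|/eqP mi /eqP mj]; rewrite ?eqxx ?(negbTE ij) //.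
by rewrite (negbTE mi) (negbTE mj).
Qed.

Lemma norm_attained_parallel (T_sym : sym_kform T) (x : 'I_k -> V) i j :
  (3 <= k)%N -> (exists w, T w != 0) -> (forall m, ipnorm ip (x m) = 1) ->
  attains_norm_at ip T x -> x i = ip (x i) (x j) *: x j.
Proof.
move=> k3 T_neq0 x1 xmax.
have [<-|ji] := eqVneq j i; first by rewrite ipnorm_unit // scale1r.
have [l /andP[li lj]] := exists_third_index i j k3.
pose F a b c := T (upd (upd (upd x l c) j b) i a).
have F_linear al a a' b c : F (al *: a + a') b c = al * F a b c + F a' b c.
  exact: T_multi.
have F_sym12 a b c : F a b c = F b a c by rewrite /F T_swap.
have F_sym23 a b c : F a b c = F a c b.
  rewrite /F !(upd_updC _ _ _ ji) !(upd_updC x _ _ li).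
  by rewrite T_swap.
have F_bounded u b c : ip b b = 1 -> ip c c = 1 ->
    cmod (F u b c) <= form_norm ip T * ipnorm ip u.
  move=> b1 c1; apply: form_norm_upd => m _; rewrite /upd.
  by case: ifP => _; [|case: ifP => _]; rewrite ?x1 ?ip_unit_norm ?lexx.
have Fx : F (x i) (x j) (x l) = T x by rewrite /F !upd_id.
apply: (maximizer_parallel (form_norm_gt0 T_neq0) F_linear F_sym12 F_sym23 F_bounded
  (c := x l)).
by split; rewrite ?ipnorm_unit ?Fx.
Qed.

End MultilinearForm.

End InnerProduct.

Theorem proposition3p1 (R : realType) (V : lmodType R[i])
  (ip : V -> V -> R[i]) (k : nat) (T : ('I_k -> V) -> R[i])
  (x : 'I_k -> V) :
  is_hilbert ip ->
  (3 <= k)%N ->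
  multilinear T ->
  sym_kform T ->
  continuous_form ip T ->
  (exists w : 'I_k -> V, T w != 0) ->
  (forall i, ipnorm ip (x i) = 1) ->
  attains_norm_at ip T x ->
  dim_one (span_of x).
Proof.
move=> ipH k3 T_multi T_sym T_cont T_neq0 x1 xmax.
have k_gt0 : (0 < k)%N by apply: leq_trans k3.
pose i0 : 'I_k := Ordinal k_gt0.
apply: (dim_one_span_collinear (i0 := i0) (c := fun i => ip (x i) (x i0))).
  by rewrite -(ipnorm_eq0 ipH) x1 oner_neq0.
by move=> i; apply: norm_attained_parallel.
Qed.
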